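(* Let $F$ be a field of characteristic $2$ and let $A$ be a quaternion algebra over $F$ with $A\cong[a,b)\cong[\alpha,\beta)$ for some $a,\alpha\in F$, $b,\beta\in F^\times$. Then there exists an element $y\in A$ with $y^2\in F^\times$ such that $A\cong[a,b)\cong[a,y^2)\cong[\alpha,y^2)\cong[\alpha,\beta)$.
   Context: For $\alpha\in F$, $\beta\in F^\times$, $[\alpha,\beta)$ denotes the quaternion algebra $F\langle i,j : i^2+i=\alpha,\ j^2=\beta,\ jij^{-1}=i+1\rangle$. *)

From mathcomp Require Import all_boot all_algebra.
Set Implicit Arguments. Unset Strict Implicit. Unset Printing Implicit Defensive.
Import GRing.Theory.
Local Open Scope ring_scope.

(* Concrete model of the quaternion algebra [al, be) over F:
   F-basis 1, i, j, k := i*j with i^2 + i = al, j^2 = be, j i j^-1 = i + 1.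
   Multiplication table (valid in characteristic 2, where the presentation
   defines a 4-dimensional algebra):
     i*i = al - i,  i*j = k,      i*k = al j - k,
     j*i = j + k,   j*j = be,     j*k = be + be i,
     k*i = al j,    k*j = be i,   k*k = al be.                           *)
Record quat (F : Type) := Quat { q0 : F; q1 : F; q2 : F; q3 : F }.

Section QuatOps.
Variable F : fieldType.

Definition qone : quat F := Quat 1 0 0 0.
Definition qadd (x y : quat F) : quat F :=
  Quat (q0 x + q0 y) (q1 x + q1 y) (q2 x + q2 y) (q3 x + q3 y).
Definition qscale (c : F) (x : quat F) : quat F :=
  Quat (c * q0 x) (c * q1 x) (c * q2 x) (c * q3 x).
Definition qmul (al be : F) (x y : quat F) : quat F :=
  let: Quat x0 x1 x2 x3 := x in let: Quat y0 y1 y2 y3 := y in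
  Quat (x0*y0 + al*x1*y1 + be*x2*y2 + be*x2*y3 + al*be*x3*y3)
       (x0*y1 + x1*y0 - x1*y1 + be*x2*y3 + be*x3*y2)
       (x0*y2 + x2*y0 + al*x1*y3 + x2*y1 + al*x3*y1)
       (x0*y3 + x3*y0 + x1*y2 - x1*y3 + x2*y1).
End QuatOps.

Definition quat_iso (F : fieldType) (A : algType F) (al be : F) : Prop :=
  exists f : quat F -> A,
    [/\ bijective f,
        forall x y, f (qadd x y) = f x + f y,
        forall (c : F) x, f (qscale c x) = c *: f x,
        forall x y, f (qmul al be x y) = f x * f y
      & f (qone F) = 1].

From mathcomp Require Import all_boot all_algebra.
From mathcomp Require Import ring.
Set Implicit Arguments. Unset Strict Implicit. Unset Printing Implicit Defensive.
Import GRing.Theory.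
Local Open Scope ring_scope.

(* Let [I, J] and [I', J'] be the images of the standard generators under
   [[a, b) ~ A] and [[al, be) ~ A].  In characteristic 2 the [I]-coordinate of
   [I'] in the basis [1, I, J, IJ] is idempotent, and it is not [0] since [I']
   is not a scalar, so [I' = p0 + I + Z] with [Z] in the span of [J] and [IJ].
   Every [y = s J + t IJ] satisfies [y I = (I + 1) y] and [y^2 = b N(s, t)] for
   the norm form [N] of [F[i]], and [y I' = (I' + 1) y] as soon as [(s, t)] is
   proportional to the coordinates of [Z]; take [y := Z], or [y := J] when
   [Z = 0].  If [y^2 != 0], then [(I, y)] and [(I', y)] present [A] as
   [[a, y^2)] and [[al, y^2)].  Otherwise [y] is a nonzero nilpotent, so [b N]
   represents a square nontrivially, hence represents [1], and both
   presentations can be rewritten with [j^2 = 1]. *)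

Notation qzero := (Quat 0 0 0 0).
Notation qi := (Quat 0 1 0 0).
Notation qj := (Quat 0 0 1 0).

Section QuatModel.
Variable F : fieldType.

Definition qcoord (x : quat F) (k : nat) : F :=
  match k with 0 => q0 x | 1 => q1 x | 2 => q2 x | _ => q3 x end.

Definition qbasis (k : nat) : quat F :=
  match k with 0 => qone F | 1 => qi | 2 => qj | _ => Quat 0 0 0 1 end.

Lemma quat_decomp (x : quat F) :
  x = qadd (qadd (qadd (qscale (q0 x) (qbasis 0)) (qscale (q1 x) (qbasis 1)))
                 (qscale (q2 x) (qbasis 2))) (qscale (q3 x) (qbasis 3)).
Proof. by case: x => x0 x1 x2 x3; congr Quat; rewrite /=; ring. Qed.

Definition qvec (x : quat F) : 'rV[F]_4 := \row_(k < 4) qcoord x k.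

Definition vecq (r : 'rV[F]_4) : quat F :=
  Quat (r 0 (inord 0)) (r 0 (inord 1)) (r 0 (inord 2)) (r 0 (inord 3)).

Lemma qvecK : cancel qvec vecq.
Proof. by case=> x0 x1 x2 x3; rewrite /vecq /qvec !mxE !inordK. Qed.

Lemma vecqK : cancel vecq qvec.
Proof.
move=> r; apply/rowP => l; rewrite /vecq /qvec mxE.
by case: l => -[|[|[|[|l]]]] lt4 //=; congr (r _ _); apply/val_inj; rewrite /= inordK.
Qed.

Lemma quat_linear_bij (phi : quat F -> quat F) :
  (forall x y, phi (qadd x y) = qadd (phi x) (phi y)) ->
  (forall c x, phi (qscale c x) = qscale c (phi x)) ->
  (forall x, phi x = qzero -> x = qzero) -> bijective phi.
Proof.
move=> phiD phiZ phi_ker.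
pose M : 'M[F]_4 := \matrix_(k < 4, l < 4) qcoord (phi (qbasis k)) l.
have phiM x : qvec (phi x) = qvec x *m M.
  rewrite {1}(quat_decomp x) !phiD !phiZ; apply/rowP => l.
  rewrite !mxE !big_ord_recr big_ord0 /= !mxE add0r.
  by case: l => -[|[|[|[|l]]]].
have qvec0 : qvec qzero = 0.
  by apply/rowP => l; rewrite !mxE; case: l => -[|[|[|[|l]]]].
have M_unit : M \in unitmx.
  rewrite -row_free_unit; apply: inj_row_free => r rM0.
  have : phi (vecq r) = qzero by rewrite -[phi _]qvecK phiM vecqK rM0 /vecq !mxE.
  by move/phi_ker/(congr1 qvec); rewrite vecqK qvec0.
exists (fun x => vecq (qvec x *m invmx M)) => x.
  by rewrite phiM mulmxK // qvecK.
by apply: (can_inj qvecK); rewrite phiM vecqK mulmxKV.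
Qed.

(* The norm form of the quadratic algebra [F[i]], [i^2 + i = a]. *)
Definition normf (a s t : F) : F := s * s + s * t + a * t * t.

Lemma qmul_pure_twist (a b p0 p2 p3 s t : F) : s * p3 = p2 * t ->
  qmul a b (Quat 0 0 s t) (Quat p0 1 p2 p3) =
  qadd (Quat 0 0 s t) (qmul a b (Quat p0 1 p2 p3) (Quat 0 0 s t)).
Proof. by move=> st_p; rewrite /= /qadd /=; congr Quat; ring: st_p. Qed.

Section Char2.
Hypothesis char2 : 2 = 0 :> F.

Lemma char2_eq (L R k x y : F) : L = R -> x - y = L - R + 2 * k -> x = y.
Proof. by move=> ->; rewrite char2 mul0r addr0 subrr => /eqP; rewrite subr_eq0 => /eqP. Qed.

Lemma normf_universal (a s t : F) :
  normf a s t = 0 -> (s != 0) || (t != 0) -> forall r, exists s' t', normf a s' t' = r.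
Proof.
move=> N0 st0 r.
have t0 : t != 0.
  apply: contraTneq st0 => t0; move: N0; rewrite /normf t0 !mulr0 !addr0 eqxx /= orbF negbK.
  by move/eqP; rewrite mulf_eq0 orbb.
pose l := (r - 1) / t.
exists (l * s + 1), (l * t).
have -> : normf a (l * s + 1) (l * t) = l * l * normf a s t + l * t + 1.
  by apply: (char2_eq (erefl 0) (k := l * s)); rewrite /normf; ring.
by rewrite N0 mulr0 add0r /l divfK // subrK.
Qed.

Lemma normf_rep1 (a b r s t : F) : b != 0 -> [|| r != 0, s != 0 | t != 0] ->
  b * normf a s t = r ^+ 2 -> exists s' t', b * normf a s' t' = 1.
Proof.
move=> b0 rst0 bN; have [r0|r0] := eqVneq r 0; last first.
  exists (s / r), (t / r).
  have -> : b * normf a (s / r) (t / r) = b * normf a s t / r ^+ 2 by rewrite /normf; field.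
  by rewrite bN divff // expf_neq0.
have N0 : normf a s t = 0.
  by move/eqP: bN; rewrite r0 expr0n mulf_eq0 (negbTE b0) => /eqP.
move: rst0; rewrite r0 eqxx /= => st0.
have [s' [t' Nb]] := normf_universal N0 st0 b^-1.
by exists s', t'; rewrite Nb divff.
Qed.

Lemma qmul_pure_sqr (a b s t : F) :
  qmul a b (Quat 0 0 s t) (Quat 0 0 s t) = Quat (b * normf a s t) 0 0 0.
Proof.
rewrite /= /normf; congr Quat; try ring.
by apply: (char2_eq (erefl 0) (k := b * s * t)); ring.
Qed.

Lemma artin_schreier_coord (a b al : F) (x : quat F) :
  qmul a b x x = qadd (Quat al 0 0 0) (qscale (-1) x) ->
  q1 x = 1 \/ x = Quat (q0 x) 0 0 0.
Proof.
case: x => p0 p1 p2 p3 /= [e0 e1 e2 e3].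
have p1_idem : p1 * p1 = p1.
  by apply: (char2_eq e1 (k := p1 * p1 - p1 - p0 * p1 - b * p2 * p3)); ring.
have [p10|p1n0] := eqVneq p1 0; last by left; apply: (mulIf p1n0); rewrite mul1r.
right; subst p1.
have -> : p2 = 0 by apply: (char2_eq e2 (k := - (p0 * p2))); ring.
by have -> : p3 = 0 by apply: (char2_eq e3 (k := - (p0 * p3))); ring.
Qed.

Lemma qmul_nil_coord (a b : F) (x : quat F) : qmul a b x x = qzero ->
  q1 x = 0 /\ b * normf a (q2 x) (q3 x) = q0 x ^+ 2.
Proof.
case: x => y0 y1 y2 y3 /= [e0 e1 _ _].
have y10 : y1 = 0.
  have : y1 * y1 = 0.
    by apply: (char2_eq e1 (k := y1 * y1 - y0 * y1 - b * y2 * y3)); ring.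
  by move/eqP; rewrite mulf_eq0 orbb => /eqP.
subst y1; split=> //.
by apply: (char2_eq e0 (k := - (y0 * y0))); rewrite /normf; ring.
Qed.

End Char2.
End QuatModel.
Arguments qbasis {F} k.

Section QuatAlgebra.
Variables (F : fieldType) (A : algType F).

Lemma scalar_eq0 (s : F) : (s%:A == 0 :> A) = (s == 0).
Proof. by rewrite scaler_eq0 oner_eq0 orbF. Qed.

Definition qlin (E : nat -> A) (x : quat F) : A := \sum_(k < 4) qcoord x k *: E k.

Lemma qlin_add E x y : qlin E (qadd x y) = qlin E x + qlin E y.
Proof.
by rewrite /qlin -big_split; apply: eq_bigr => -[[|[|[|k]]] lt4] _ /=; rewrite scalerDl.
Qed.

Lemma qlin_scale E c x : qlin E (qscale c x) = c *: qlin E x.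
Proof.
by rewrite /qlin scaler_sumr; apply: eq_bigr => -[[|[|[|k]]] lt4] _ /=; rewrite scalerA.
Qed.

Lemma qlin_mul (a b : F) E :
  (forall k l, (k < 4)%N -> (l < 4)%N -> E k * E l = qlin E (qmul a b (qbasis k) (qbasis l))) ->
  forall x y, qlin E (qmul a b x y) = qlin E x * qlin E y.
Proof.
move=> E_mul x y.
transitivity (\sum_(k < 4) \sum_(l < 4) \sum_(m < 4)
    (qcoord x k * qcoord y l * qcoord (qmul a b (qbasis k) (qbasis l)) m) *: E m).
  under [RHS]eq_bigr => k _ do rewrite exchange_big /=.
  rewrite exchange_big /=; apply: eq_bigr => m _.
  under [RHS]eq_bigr => k _ do rewrite -scaler_suml.
  rewrite -scaler_suml; congr (_ *: _).
  case: x => x0 x1 x2 x3; case: y => y0 y1 y2 y3.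
  rewrite !big_ord_recr !big_ord0 /=.
  by case: m => -[|[|[|[|m]]]] lt4 //=; ring.
rewrite /qlin mulr_suml; apply: eq_bigr => k _.
rewrite mulr_sumr; apply: eq_bigr => l _.
rewrite -scalerAl -scalerAr scalerA E_mul // /qlin scaler_sumr.
by apply: eq_bigr => m _; rewrite scalerA.
Qed.

Definition gen_basis (u v : A) (k : nat) : A :=
  match k with 0 => 1 | 1 => u | 2 => v | _ => u * v end.

Definition quat_gens (a c : F) (u v : A) : Prop :=
  [/\ u * u = a%:A - u, v * v = c%:A & v * u = v + u * v].

Lemma gen_basis_mul (a c : F) (u v : A) : quat_gens a c u v ->
  forall k l, (k < 4)%N -> (l < 4)%N ->
  gen_basis u v k * gen_basis u v l = qlin (gen_basis u v) (qmul a c (qbasis k) (qbasis l)).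
Proof.
move=> [uu vv vu] k l lt_k lt_l; rewrite /qlin !big_ord_recr big_ord0 /= add0r.
have uuv : u * (u * v) = a *: v - u * v by rewrite mulrA uu mulrBl -scalerAl mul1r.
have vuv : v * (u * v) = c%:A + c *: u by rewrite mulrA vu mulrDl -mulrA vv -scalerAr mulr1.
have uvu : u * v * u = a *: v by rewrite -mulrA vu mulrDr uuv addrC subrK.
have uvv : u * v * v = c *: u by rewrite -mulrA vv -scalerAr mulr1.
have uvuv : u * v * (u * v) = (a * c)%:A by rewrite mulrA uvu -scalerAl vv scalerA.
case: k lt_k => [|[|[|[|k]]]] // _; case: l lt_l => [|[|[|[|l]]]] // _ /=;
  by rewrite ?(mul0r, mulr0, mul1r, mulr1, add0r, addr0, subr0, sub0r,
               scale0r, scale1r, oppr0, scaleN1r).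
Qed.

Definition qmorph (a b : F) (f : quat F -> A) : Prop :=
  [/\ forall x y, f (qadd x y) = f x + f y,
      forall (c : F) x, f (qscale c x) = c *: f x,
      forall x y, f (qmul a b x y) = f x * f y
    & f (qone F) = 1].

Lemma quat_iso_morph a b : quat_iso A a b -> exists2 f, bijective f & qmorph a b f.
Proof. by move=> [f [fbij fD fZ fM f1]]; exists f. Qed.

Lemma qmorph_scalar a b f : qmorph a b f -> forall s, f (Quat s 0 0 0) = s%:A.
Proof.
move=> [_ fZ _ f1] s; rewrite -f1 -fZ; congr f.
by rewrite /qscale /= mulr1 mulr0.
Qed.

Lemma qmorph_zero a b f : qmorph a b f -> f qzero = 0.
Proof. by move/qmorph_scalar/(_ 0); rewrite scale0r. Qed.

Lemma qmorph_gens a b f : qmorph a b f -> quat_gens a b (f qi) (f qj).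
Proof.
move=> fm; have [fD fZ fM _] := fm.
split; rewrite -fM.
- have -> : qmul a b qi qi = qadd (Quat a 0 0 0) (qscale (-1) qi).
    by rewrite /= /qadd /qscale /=; congr Quat; ring.
  by rewrite fD fZ (qmorph_scalar fm) scaleN1r.
- have -> : qmul a b qj qj = Quat b 0 0 0 by rewrite /=; congr Quat; ring.
  by rewrite (qmorph_scalar fm).
- by rewrite -fM -fD; congr f; rewrite /= /qadd /=; congr Quat; ring.
Qed.

(* [a, c) is simple: commutators with [i] and [j] carry any element of the
   kernel to a multiple of [c] in [F]. *)
Lemma qmorph_ker0 a c f : c != 0 -> qmorph a c f -> forall x, f x = 0 -> x = qzero.
Proof.
move=> c0 fm; have [fD fZ fM _] := fm.
have ker_comm y x : f x = 0 ->
    f (qmul a c (qadd (qmul a c y x) (qscale (-1) (qmul a c x y))) qj) = 0.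
  by move=> fx0; rewrite fM fD fZ !fM fx0 mulr0 mul0r scaler0 addr0 mul0r.
have ker_scalar r : f (Quat r 0 0 0) = 0 -> r = 0.
  by rewrite (qmorph_scalar fm) => /eqP; rewrite scalar_eq0 => /eqP.
have ker_complex s t : f (Quat s t 0 0) = 0 -> s = 0 /\ t = 0.
  move=> fst0; have := ker_comm qj _ fst0.
  have -> : qmul a c (qadd (qmul a c qj (Quat s t 0 0))
              (qscale (-1) (qmul a c (Quat s t 0 0) qj))) qj = Quat (t * c) 0 0 0.
    by rewrite /=; congr Quat; ring.
  move/ker_scalar/eqP; rewrite mulf_eq0 (negbTE c0) orbF => /eqP t0.
  by move: fst0; rewrite t0 => /ker_scalar ->.
move=> [x0 x1 x2 x3] fx0; have := ker_comm qi _ fx0.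
have -> : qmul a c (qadd (qmul a c qi (Quat x0 x1 x2 x3))
            (qscale (-1) (qmul a c (Quat x0 x1 x2 x3) qi))) qj = Quat (- (c * x2)) (- (c * x3)) 0 0.
  by rewrite /=; congr Quat; ring.
move/ker_complex => [/eqP + /eqP]; rewrite !oppr_eq0 !mulf_eq0 (negbTE c0) /= => /eqP x20 /eqP x30.
subst x2 x3; by have [-> ->] := ker_complex _ _ fx0.
Qed.

Lemma qlin_gens_morph a c u v : quat_gens a c u v -> qmorph a c (qlin (gen_basis u v)).
Proof.
move=> uv; split.
- exact: qlin_add.
- exact: qlin_scale.
- exact: qlin_mul (gen_basis_mul uv).
- by rewrite /qlin !big_ord_recr big_ord0 /= !scale0r !addr0 add0r scale1r.
Qed.

Lemma quat_linear_ker0_bij (g f : quat F -> A) : bijective g ->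
  (forall x y, g (qadd x y) = g x + g y) -> (forall c x, g (qscale c x) = c *: g x) ->
  (forall x y, f (qadd x y) = f x + f y) -> (forall c x, f (qscale c x) = c *: f x) ->
  (forall x, f x = 0 -> x = qzero) -> bijective f.
Proof.
move=> gbij gD gZ fD fZ f_ker; have [ginv gK ginvK] := gbij.
have g0 : g qzero = 0 by rewrite -(scale0r (g qzero)) -gZ /qscale /= mul0r.
have phi_bij : bijective (ginv \o f).
  apply: quat_linear_bij => [x y|c x|x] /=.
  - by apply: (can_inj gK); rewrite gD !ginvK fD.
  - by apply: (can_inj gK); rewrite gZ !ginvK fZ.
  - by move/(congr1 g); rewrite ginvK g0; apply: f_ker.
by apply: (eq_bij (bij_comp gbij phi_bij)) => x /=; rewrite ginvK.
Qed.

Lemma quat_iso_gens (a0 b0 a c : F) (u v : A) : quat_iso A a0 b0 -> c != 0 ->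
  quat_gens a c u v -> quat_iso A a c.
Proof.
move=> [g [gbij gD gZ _ _]] c0 uv; have fm := qlin_gens_morph uv.
have [fD fZ fM f1] := fm.
exists (qlin (gen_basis u v)); split => //.
exact: quat_linear_ker0_bij gbij gD gZ fD fZ (qmorph_ker0 c0 fm).
Qed.

Section Char2.
Hypothesis char2 : 2 = 0 :> F.

Lemma quat_iso_split (a b : F) (w : A) :
  quat_iso A a b -> b != 0 -> w != 0 -> w * w = 0 -> quat_iso A a 1.
Proof.
move=> isoA b0 w0 ww; have [g [ginv gK ginvK] gm] := quat_iso_morph isoA.
have [gD _ gM _] := gm.
have Y2 : qmul a b (ginv w) (ginv w) = qzero.
  by apply: (can_inj gK); rewrite gM ginvK ww (qmorph_zero gm).
have [Y1 bNY] := qmul_nil_coord char2 Y2.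
have Y0 : [|| q0 (ginv w) != 0, q2 (ginv w) != 0 | q3 (ginv w) != 0].
  move: w0; apply: contraNT; rewrite !negb_or !negbK => /and3P[/eqP y0 /eqP y2 /eqP y3].
  apply/eqP; rewrite -[w]ginvK; move: Y1 y0 y2 y3; case: (ginv w) => ???? /= -> -> -> ->.
  exact: qmorph_zero gm.
have [s [t bN1]] := normf_rep1 char2 b0 Y0 bNY.
apply: (quat_iso_gens isoA (oner_neq0 F) (u := g qi) (v := g (Quat 0 0 s t))).
have [gi _ _] := qmorph_gens gm; split=> //.
- by rewrite -gM qmul_pure_sqr // bN1 (qmorph_scalar gm).
- by rewrite -!gM -gD qmul_pure_twist // mulr0 mul0r.
Qed.

Lemma quat_iso_i_coord (a b al be : F) (g : quat F -> A) (u v : A) :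
  bijective g -> qmorph a b g -> be != 0 -> quat_gens al be u v ->
  exists p0 p2 p3, u = g (Quat p0 1 p2 p3).
Proof.
move=> [ginv gK ginvK] gm be0 [uu vv vu]; have [gD gZ gM _] := gm.
have P2 : qmul a b (ginv u) (ginv u) = qadd (Quat al 0 0 0) (qscale (-1) (ginv u)).
  by apply: (can_inj gK); rewrite gM gD gZ ginvK uu (qmorph_scalar gm) scaleN1r.
case: (artin_schreier_coord char2 P2) => [P1|Pscalar].
  by exists (q0 (ginv u)), (q2 (ginv u)), (q3 (ginv u)); rewrite -P1 -[LHS]ginvK; case: (ginv u).
have u_scalar : u = (q0 (ginv u))%:A by rewrite -[LHS]ginvK {1}Pscalar (qmorph_scalar gm).
have v0 : v = 0.
  have -> : v = v * u - u * v by rewrite vu addrK.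
  by rewrite u_scalar mulr_algr mulr_algl subrr.
by move: vv; rewrite v0 mul0r => /esym/eqP; rewrite scalar_eq0 (negbTE be0).
Qed.

End Char2.
End QuatAlgebra.

Theorem lemma4 (F : fieldType) (A : algType F) (a b al be : F) :
  2%N \in [pchar F] -> b != 0 -> be != 0 ->
  quat_iso A a b -> quat_iso A al be ->
  exists (y : A) (c : F),
    [/\ c != 0, y ^+ 2 = c%:A, quat_iso A a c & quat_iso A al c].
Proof.
move=> /pcharf0 char2 b0 be0 isoA isoB.
have [g gbij gm] := quat_iso_morph isoA; have [gD _ gM _] := gm.
have [h _ hm] := quat_iso_morph isoB.
have [gi _ _] := qmorph_gens gm; have [hi _ _] := qmorph_gens hm.
have [p0 [p2 [p3 hP]]] := quat_iso_i_coord char2 gbij gm be0 (qmorph_gens hm).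
have [s [t [st0 st_p]]] : exists s t, (s != 0) || (t != 0) /\ s * p3 = p2 * t.
  have [p20|p2n0] := eqVneq p2 0; have [p30|p3n0] := eqVneq p3 0;
    try by exists p2, p3; rewrite ?p2n0 ?p3n0 ?orbT.
  by exists 1, 0; rewrite oner_neq0 p20 p30 !mulr0.
pose y := g (Quat 0 0 s t); pose c := b * normf a s t.
have yy : y * y = c%:A by rewrite -gM qmul_pure_sqr // (qmorph_scalar gm).
have yi : y * g qi = y + g qi * y by rewrite -!gM -gD qmul_pure_twist // mulr0 mul0r.
have yP : y * h qi = y + h qi * y by rewrite hP -!gM -gD qmul_pure_twist.
have [c0|c0] := eqVneq c 0; last first.
  exists y, c; split; rewrite ?expr2 //.
    exact: quat_iso_gens isoA c0 (And3 gi yy yi).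
  exact: quat_iso_gens isoA c0 (And3 hi yy yP).
have y0 : y != 0.
  apply: contraTneq st0; rewrite -(qmorph_zero gm) => /(bij_inj gbij) [-> ->].
  by rewrite eqxx.
have yy0 : y * y = 0 by rewrite yy c0 scale0r.
exists 1, 1; rewrite oner_neq0 expr1n scale1r; split=> //.
  exact: (quat_iso_split char2 isoA b0 y0 yy0).
exact: (quat_iso_split char2 isoB be0 y0 yy0).
Qed.
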